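(* Let $B$ be a symmetric positive definite $3\times3$ matrix with orthonormal eigenvectors $\mathbf e_1,\mathbf e_2,\mathbf e_3$, and let $\mathbb M=\sum_{i=1}^3\mathbf e_i\mathbf e_i\mathbf e_i\mathbf e_i$ (so $\mathbb M_{abcd}=\sum_i (\mathbf e_i)_a(\mathbf e_i)_b(\mathbf e_i)_c(\mathbf e_i)_d$). Then for every symmetric $3\times3$ matrix $N$, $$\mathbb D(B):(\mathbb M:N)=\mathbb M:(\mathbb D(B):N).$$ Consequently, if $\frac{dA}{dt}=F$, $\frac{dB}{dt}=G$ with $F=-\mathbb C(B):G$ (equivalently $G=-\mathbb D(B):F$), and $0<\kappa\le1$, then replacing $F$ by $F-(1-\kappa)\mathbb M:F$ and $G$ by $G-(1-\kappa)\mathbb M:G$ preserves the relation $\frac{dB}{dt}=-\mathbb D(B):\frac{dA}{dt}$.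
   Context: For a symmetric positive definite matrix $B$, $$\mathbb C(B)=\tfrac34\int_0^\infty\frac{\mathcal S\big((B+sI)^{-1}\otimes(B+sI)^{-1}\big)\,ds}{\sqrt{\det(B+sI)}},$$ where $\mathcal S(\mathbb T)_{ijkl}$ is the average of $\mathbb T_{mnpq}$ over all permutations $(m,n,p,q)$ of $(i,j,k,l)$, and $(\mathbb T:M)_{ij}=\sum_{k,l}\mathbb T_{ijkl}M_{kl}$. The map $M\mapsto\mathbb C(B):M$ on symmetric matrices is invertible, and $\mathbb D(B)$ denotes the rank-4 tensor with $\mathbb D_{ijkl}=\mathbb D_{jikl}=\mathbb D_{ijlk}$ such that $\mathbb C(B):\mathbb D(B):M=\mathbb D(B):\mathbb C(B):M=M$ for all symmetric $M$. *)

From HB Require Import structures.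
From mathcomp Require Import all_boot all_order all_algebra all_fingroup.
From mathcomp Require Import all_classical all_reals all_analysis.
Set Implicit Arguments. Unset Strict Implicit. Unset Printing Implicit Defensive.
Import Order.TTheory GRing.Theory Num.Theory.
Local Open Scope ring_scope.
Local Open Scope classical_set_scope.

Definition tensor4 (R : realType) := 'I_3 -> 'I_3 -> 'I_3 -> 'I_3 -> R.

Definition ddot (R : realType) (T : tensor4 R) (M : 'M[R]_3) : 'M[R]_3 :=
  \matrix_(i < 3, j < 3) \sum_(k < 3) \sum_(l < 3) T i j k l * M k l.

Definition tprod (R : realType) (A A' : 'M[R]_3) : tensor4 R :=
  fun i j k l => A i j * A' k l.

Definition symmetrize (R : realType) (T : tensor4 R) : tensor4 R :=
  fun i j k l =>
    let x : 'I_4 -> 'I_3 := fun p => tnth [tuple i; j; k; l] p in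
    (4`!%:R)^-1 * \sum_(s : 'S_4)
       T (x (s ord0)) (x (s (inord 1))) (x (s (inord 2))) (x (s (inord 3))).

Definition C_integrand (R : realType) (B : 'M[R]_3) (i j k l : 'I_3) (s : R) : R :=
  let Bs := B + s%:M in
  symmetrize (tprod (invmx Bs) (invmx Bs)) i j k l / Num.sqrt (\det Bs).

Definition Ctensor (R : realType) (B : 'M[R]_3) : tensor4 R :=
  fun i j k l => (3%:R / 4%:R) *
    Rintegral (@lebesgue_measure R) `[0%R, +oo[ (C_integrand B i j k l).

Definition symmetric_mx (R : realType) (M : 'M[R]_3) : Prop := M^T = M.

Definition spd (R : realType) (B : 'M[R]_3) : Prop :=
  symmetric_mx B /\ forall v : 'cV[R]_3, v != 0 -> 0 < (v^T *m B *m v) ord0 ord0.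

Definition is_Dtensor (R : realType) (B : 'M[R]_3) (D : tensor4 R) : Prop :=
  (forall i j k l, D i j k l = D j i k l) /\
  (forall i j k l, D i j k l = D i j l k) /\
  (forall M : 'M[R]_3, symmetric_mx M ->
     ddot (Ctensor B) (ddot D M) = M /\ ddot D (ddot (Ctensor B) M) = M).

Definition Mtensor (R : realType) (e : 'I_3 -> 'cV[R]_3) : tensor4 R :=
  fun a b c d => \sum_(i < 3) e i a ord0 * e i b ord0 * e i c ord0 * e i d ord0.

From HB Require Import structures.
From mathcomp Require Import all_boot all_order all_algebra all_fingroup.
From mathcomp Require Import all_classical all_reals all_analysis.
From mathcomp Require Import measurable_realfun ring lra.
Set Implicit Arguments. Unset Strict Implicit. Unset Printing Implicit Defensive.
Import Order.TTheory GRing.Theory Num.Theory.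
Import numFieldNormedType.Exports.
Local Open Scope ring_scope.

(* Write eigmx mu = sum_p mu_p e_p e_p^T for the symmetric matrix with
   eigenvectors e_p and eigenvalues mu_p.  Then B = eigmx lam with lam > 0,
   (B + sI)^-1 = eigmx (1 / (lam + s)) and det (B + sI) = prod_p (lam_p + s).
   1. Every term of the symmetrization of Q (x) Q is one of the three pairings
      Q_ij Q_kl, Q_ik Q_jl, Q_il Q_jk (Q symmetric), and for Q = eigmx mu each
      pairing commutes with M, because M : Y = eigmx (e_p^T Y e_p) keeps the
      diagonal of Y in the eigenbasis.  So the integrand of C(B) commutes with M.
   2. Commutation survives scaling, finite sums and entrywise integration of
      integrable families; the integrand is dominated by a multiple of
      1/(lam_p + s)^2 + 1/(lam_q + s)^2, hence C(B) commutes with M.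
   3. M has symmetric values and D(B) inverts C(B) on symmetric matrices, so
      D(B) commutes with M on symmetric matrices; the relaxation statement is
      then a linear consequence. *)

Section TensorAlgebra.
Variable R : realType.
Implicit Types (T W C D : tensor4 R) (X Y : 'M[R]_3).

Definition commute_tensor T W : Prop :=
  forall X, ddot T (ddot W X) = ddot W (ddot T X).

Lemma ddotD T X Y : ddot T (X + Y) = ddot T X + ddot T Y.
Proof.
apply/matrixP => i j; rewrite !mxE -big_split; apply: eq_bigr => k _.
by rewrite -big_split; apply: eq_bigr => l _; rewrite mxE mulrDr.
Qed.

Lemma ddotZ T a X : ddot T (a *: X) = a *: ddot T X.
Proof.
apply/matrixP => i j; rewrite !mxE mulr_sumr; apply: eq_bigr => k _.
by rewrite mulr_sumr; apply: eq_bigr => l _; rewrite mxE mulrCA.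
Qed.

Lemma ddotN T X : ddot T (- X) = - ddot T X.
Proof. by rewrite -scaleN1r ddotZ scaleN1r. Qed.

Lemma ddot_sum (I : finType) T (F : I -> 'M[R]_3) :
  ddot T (\sum_p F p) = \sum_p ddot T (F p).
Proof.
apply/matrixP => i j; rewrite !mxE summxE.
under eq_bigr do under eq_bigr do rewrite summxE mulr_sumr.
under eq_bigr do rewrite exchange_big /=.
by rewrite exchange_big /=; apply: eq_bigr => p _; rewrite mxE.
Qed.

Lemma ddot_scale_tensor c T X :
  ddot (fun i j k l => c * T i j k l) X = c *: ddot T X.
Proof.
apply/matrixP => i j; rewrite !mxE mulr_sumr; apply: eq_bigr => k _.
by rewrite mulr_sumr; apply: eq_bigr => l _; rewrite mulrA.
Qed.

Lemma ddot_sum_tensor (I : finType) (T : I -> tensor4 R) X :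
  ddot (fun i j k l => \sum_s T s i j k l) X = \sum_s ddot (T s) X.
Proof.
apply/matrixP => i j; rewrite !mxE summxE.
under eq_bigr do under eq_bigr do rewrite mulr_suml.
under eq_bigr do rewrite exchange_big /=.
by rewrite exchange_big /=; apply: eq_bigr => s _; rewrite mxE.
Qed.

Lemma commute_scale c T W :
  commute_tensor T W -> commute_tensor (fun i j k l => c * T i j k l) W.
Proof. by move=> cTW X; rewrite !ddot_scale_tensor cTW ddotZ. Qed.

Lemma commute_sum (I : finType) (T : I -> tensor4 R) W :
  (forall s, commute_tensor (T s) W) ->
  commute_tensor (fun i j k l => \sum_s T s i j k l) W.
Proof.
move=> cTW X; rewrite !ddot_sum_tensor ddot_sum.
by apply: eq_bigr => s _; rewrite cTW.
Qed.

Lemma commute_inverse C D W :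
  commute_tensor C W ->
  (forall X, symmetric_mx (ddot W X)) ->
  (forall X, symmetric_mx X -> ddot C (ddot D X) = X /\ ddot D (ddot C X) = X) ->
  forall N, symmetric_mx N -> ddot D (ddot W N) = ddot W (ddot D N).
Proof.
move=> cCW Wsym DC N symN.
have CWDN : ddot C (ddot W (ddot D N)) = ddot W N.
  by rewrite cCW (DC N symN).1.
by rewrite -CWDN (DC _ (Wsym _)).2.
Qed.

Lemma relaxation_preserves_relation D W (F G : 'M[R]_3) (c : R) :
  (forall N, symmetric_mx N -> ddot D (ddot W N) = ddot W (ddot D N)) ->
  symmetric_mx F -> ddot D F = - G ->
  G - c *: ddot W G = - ddot D (F - c *: ddot W F).
Proof.
move=> DW symF DF.
by rewrite ddotD ddotN ddotZ DW // DF ddotN scalerN opprD !opprK.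
Qed.

End TensorAlgebra.

Section PairingTensors.
Variable R : realType.
Implicit Types (Q X Y : 'M[R]_3).

Definition pair_ij_kl Q : tensor4 R := fun i j k l => Q i j * Q k l.
Definition pair_ik_jl Q : tensor4 R := fun i j k l => Q i k * Q j l.
Definition pair_il_jk Q : tensor4 R := fun i j k l => Q i l * Q j k.

Definition frob Q Y : R := \sum_k \sum_l Q k l * Y k l.

Lemma ddot_pair_ij_kl Q Y : ddot (pair_ij_kl Q) Y = frob Q Y *: Q.
Proof.
apply/matrixP => i j; rewrite !mxE /frob mulr_suml; apply: eq_bigr => k _.
by rewrite mulr_suml; apply: eq_bigr => l _; rewrite /pair_ij_kl; ring.
Qed.

Lemma ddot_pair_ik_jl Q Y : ddot (pair_ik_jl Q) Y = Q *m Y *m Q^T.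
Proof.
apply/matrixP => i j; rewrite !mxE exchange_big /=; apply: eq_bigr => l _.
by rewrite !mxE mulr_suml; apply: eq_bigr => k _; rewrite /pair_ik_jl; ring.
Qed.

Lemma ddot_pair_il_jk Q Y : ddot (pair_il_jk Q) Y = Q *m Y^T *m Q^T.
Proof.
apply/matrixP => i j; rewrite !mxE; apply: eq_bigr => k _.
by rewrite !mxE mulr_suml; apply: eq_bigr => l _; rewrite !mxE /pair_il_jk; ring.
Qed.

Definition pairing_term Q (a b c d : 'I_4) : tensor4 R :=
  fun i j k l => let x : 'I_4 -> 'I_3 := fun p => tnth [tuple i; j; k; l] p in
    Q (x a) (x b) * Q (x c) (x d).

(* Checks a concrete identity between two products of entries of a symmetric
   matrix, up to commuting the factors. *)
Local Ltac solve_pairing Qsym :=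
  apply: funext; intros i; apply: funext; intros j;
  apply: funext; intros k; apply: funext; intros l;
  rewrite /pairing_term /pair_ij_kl /pair_ik_jl /pair_il_jk /tnth /=;
  rewrite ?(Qsym j i) ?(Qsym k i) ?(Qsym l i) ?(Qsym k j) ?(Qsym l j) ?(Qsym l k);
  first [done | exact: mulrC].

(* For symmetric Q, a term with distinct positions only depends on which
   position is paired with the first one. *)
Lemma pairing_term_cases Q (a b c d : 'I_4) :
  (forall u v, Q u v = Q v u) ->
  [&& a != b, a != c, a != d, b != c, b != d & c != d] ->
  [\/ pairing_term Q a b c d = pair_ij_kl Q,
      pairing_term Q a b c d = pair_ik_jl Q |
      pairing_term Q a b c d = pair_il_jk Q].
Proof.
move=> Qsym; case: a => [[|[|[|[|?]]]] ?] //; case: b => [[|[|[|[|?]]]] ?] //;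
  case: c => [[|[|[|[|?]]]] ?] //; case: d => [[|[|[|[|?]]]] ?] // _.
all: first [ by apply: Or31; solve_pairing Qsym | by apply: Or32; solve_pairing Qsym
           | by apply: Or33; solve_pairing Qsym ].
Qed.

Lemma symmetrize_tprod Q :
  symmetrize (tprod Q Q) = fun i j k l => (4`!%:R)^-1 *
    \sum_(s : 'S_4) pairing_term Q (s ord0) (s (inord 1)) (s (inord 2)) (s (inord 3)) i j k l.
Proof. by []. Qed.

Lemma pairing_term_perm Q (s : 'S_4) :
  (forall u v, Q u v = Q v u) ->
  [\/ pairing_term Q (s ord0) (s (inord 1)) (s (inord 2)) (s (inord 3)) = pair_ij_kl Q,
      pairing_term Q (s ord0) (s (inord 1)) (s (inord 2)) (s (inord 3)) = pair_ik_jl Q |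
      pairing_term Q (s ord0) (s (inord 1)) (s (inord 2)) (s (inord 3)) = pair_il_jk Q].
Proof.
move=> Qsym; apply: pairing_term_cases => //.
by rewrite !(inj_eq perm_inj) -!val_eqE /= !inordK.
Qed.

End PairingTensors.

Section Eigenbasis.
Variables (R : realType) (e : 'I_3 -> 'cV[R]_3).
Hypothesis orth : forall p q : 'I_3, (e p)^T *m e q = (p == q)%:R%:M.
Implicit Types (mu : 'I_3 -> R) (X Y : 'M[R]_3).

Definition eigproj p : 'M[R]_3 := e p *m (e p)^T.

Definition eigmx mu : 'M[R]_3 := \sum_p mu p *: eigproj p.

Definition eigcoef p Y : R := ((e p)^T *m Y *m e p) ord0 ord0.

Lemma eigprojE p i j : eigproj p i j = e p i ord0 * e p j ord0.
Proof. by rewrite /eigproj mxE big_ord1 mxE. Qed.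

Lemma eigmxE mu i j : eigmx mu i j = \sum_p mu p * (e p i ord0 * e p j ord0).
Proof. by rewrite /eigmx summxE; apply: eq_bigr => p _; rewrite mxE eigprojE. Qed.

Lemma eigmx_tr mu : (eigmx mu)^T = eigmx mu.
Proof.
apply/matrixP => i j; rewrite mxE !eigmxE.
by apply: eq_bigr => p _; rewrite (mulrC (e p j _)).
Qed.

Lemma eigproj_eigmx mu p : eigproj p *m eigmx mu = mu p *: eigproj p.
Proof.
rewrite /eigmx mulmx_sumr (bigD1 p) //= big1 ?addr0 => [|q qp];
  rewrite -scalemxAr /eigproj mulmxA -(mulmxA (e p)) orth mul_mx_scalar -scalemxAl.
  by rewrite eqxx scale1r.
by rewrite eq_sym (negPf qp) !scale0r scaler0.
Qed.

Lemma eigmxM a b : eigmx a *m eigmx b = eigmx (fun p => a p * b p).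
Proof.
rewrite {1}/eigmx mulmx_suml; apply: eq_bigr => p _.
by rewrite -scalemxAl eigproj_eigmx scalerA.
Qed.

Lemma eigvec_left mu p : (e p)^T *m eigmx mu = mu p *: (e p)^T.
Proof.
rewrite /eigmx mulmx_sumr (bigD1 p) //= big1 ?addr0 => [|q qp];
  rewrite -scalemxAr /eigproj mulmxA orth mul_scalar_mx.
  by rewrite eqxx scale1r.
by rewrite eq_sym (negPf qp) !scale0r scaler0.
Qed.

Lemma eigvec_right mu p : eigmx mu *m e p = mu p *: e p.
Proof.
rewrite /eigmx mulmx_suml (bigD1 p) //= big1 ?addr0 => [|q qp];
  rewrite -scalemxAl /eigproj -mulmxA orth mul_mx_scalar.
  by rewrite eqxx scale1r.
by rewrite (negPf qp) !scale0r scaler0.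
Qed.

Lemma eigcoefE p Y :
  eigcoef p Y = \sum_k \sum_l e p k ord0 * e p l ord0 * Y k l.
Proof.
rewrite /eigcoef mxE exchange_big /=; apply: eq_bigr => l _.
rewrite mxE mulr_suml; apply: eq_bigr => k _.
by rewrite mxE; ring.
Qed.

Lemma eigcoef_eigmx p mu : eigcoef p (eigmx mu) = mu p.
Proof. by rewrite /eigcoef eigvec_left -scalemxAl orth eqxx !mxE /= mulr1. Qed.

Lemma eigcoef_sandwich p mu Y :
  eigcoef p (eigmx mu *m Y *m eigmx mu) = mu p ^+ 2 * eigcoef p Y.
Proof.
rewrite /eigcoef !mulmxA eigvec_left -!mulmxA eigvec_right.
by rewrite -scalemxAl -!scalemxAr scalerA [in LHS]mxE !mulmxA expr2.
Qed.

Lemma eigcoef_tr p Y : eigcoef p Y^T = eigcoef p Y.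
Proof. by rewrite /eigcoef -(trmxK (e p)) -!trmx_mul mxE trmxK mulmxA. Qed.

Lemma Mtensor_ddot Y : ddot (Mtensor e) Y = eigmx (fun p => eigcoef p Y).
Proof.
apply/matrixP => i j; rewrite mxE eigmxE.
under eq_bigr do under eq_bigr do rewrite /Mtensor mulr_suml.
under eq_bigr do rewrite exchange_big /=.
rewrite exchange_big /=; apply: eq_bigr => p _.
rewrite eigcoefE mulr_suml; apply: eq_bigr => k _.
by rewrite mulr_suml; apply: eq_bigr => l _; ring.
Qed.

Lemma Mtensor_sym Y : symmetric_mx (ddot (Mtensor e) Y).
Proof. by rewrite /symmetric_mx Mtensor_ddot eigmx_tr. Qed.

Lemma eigcoef_Mtensor p Y : eigcoef p (ddot (Mtensor e) Y) = eigcoef p Y.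
Proof. by rewrite Mtensor_ddot eigcoef_eigmx. Qed.

Lemma Mtensor_eigmx mu : ddot (Mtensor e) (eigmx mu) = eigmx mu.
Proof. by rewrite Mtensor_ddot; apply: eq_bigr => p _; rewrite eigcoef_eigmx. Qed.

Lemma Mtensor_sandwich mu Y :
  eigmx mu *m ddot (Mtensor e) Y *m eigmx mu
  = ddot (Mtensor e) (eigmx mu *m Y *m eigmx mu).
Proof.
rewrite !Mtensor_ddot !eigmxM; apply: eq_bigr => p _.
by rewrite eigcoef_sandwich expr2 mulrAC.
Qed.

End Eigenbasis.

Section Spectral.
Variables (R : realType) (e : 'I_3 -> 'cV[R]_3).
Hypothesis orth : forall p q : 'I_3, (e p)^T *m e q = (p == q)%:R%:M.
Implicit Types (a mu : 'I_3 -> R).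

(* The matrix whose columns are the e_p is orthogonal, so the projectors
   onto the e_p resolve the identity. *)
Definition eigbasis_mx : 'M[R]_3 := \matrix_(i, p) e p i ord0.

Lemma eigbasis_mx_orth : eigbasis_mx^T *m eigbasis_mx = 1%:M.
Proof.
apply/matrixP => p q; transitivity (((e p)^T *m e q) ord0 ord0).
  by rewrite !mxE; apply: eq_bigr => k _; rewrite !mxE.
by rewrite orth !mxE /= mulr1n; case: eqVneq.
Qed.

Lemma sum_eigproj : \sum_p eigproj e p = 1%:M.
Proof.
rewrite -(mulmx1C eigbasis_mx_orth); apply/matrixP => i j; rewrite summxE mxE.
by apply: eq_bigr => p _; rewrite eigprojE !mxE.
Qed.

Lemma eigmx_shift a s : eigmx e (fun p => a p + s) = eigmx e a + s%:M.
Proof.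
rewrite /eigmx -scalemx1 -sum_eigproj scaler_sumr -big_split.
by apply: eq_bigr => p _; rewrite scalerDl.
Qed.

Lemma eigmx_inv a : (forall p, a p != 0) -> invmx (eigmx e a) = eigmx e (fun p => (a p)^-1).
Proof.
move=> a0; have aaV : eigmx e a *m eigmx e (fun p => (a p)^-1) = 1%:M.
  rewrite eigmxM // -sum_eigproj; apply: eq_bigr => p _.
  by rewrite mulfV // scale1r.
have [ua _] := mulmx1_unit aaV.
by rewrite -[invmx _]mulmx1 -aaV mulmxA mulVmx // mul1mx.
Qed.

Lemma eigmx_det a : \det (eigmx e a) = \prod_p a p.
Proof.
have -> : eigmx e a = eigbasis_mx *m diag_mx (\row_p a p) *m eigbasis_mx^T.
  apply/matrixP => i j; rewrite mul_mx_diag eigmxE mxE; apply: eq_bigr => p _.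
  by rewrite !mxE; ring.
have detE1 : \det eigbasis_mx * \det eigbasis_mx = 1.
  by rewrite -{1}det_tr -det_mulmx eigbasis_mx_orth det1.
rewrite !det_mulmx det_diag det_tr mulrAC detE1 mul1r.
by apply: eq_bigr => p _; rewrite mxE.
Qed.

Lemma spectral_decomposition (B : 'M[R]_3) lam :
  (forall p, B *m e p = lam p *: e p) -> B = eigmx e lam.
Proof.
move=> eig; rewrite -[B]mulmx1 -sum_eigproj mulmx_sumr /eigmx.
by apply: eq_bigr => p _; rewrite /eigproj mulmxA eig -scalemxAl.
Qed.

Lemma spd_eigenvalue_pos (B : 'M[R]_3) p lam :
  spd B -> B *m e p = lam *: e p -> 0 < lam.
Proof.
move=> [_ Bpos] eig.
have ep_neq0 : e p != 0.
  apply/eqP => ep0; move/matrixP/(_ ord0 ord0): (orth p p).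
  by rewrite ep0 mulmx0 eqxx !mxE /= mulr1n => /esym/eqP; rewrite oner_eq0.
have := Bpos _ ep_neq0.
by rewrite -mulmxA eig -scalemxAr orth eqxx !mxE /= mulr1n mulr1.
Qed.

End Spectral.

Section CommutationWithM.
Variables (R : realType) (e : 'I_3 -> 'cV[R]_3).
Hypothesis orth : forall p q : 'I_3, (e p)^T *m e q = (p == q)%:R%:M.
Variable mu : 'I_3 -> R.
Local Notation Q := (eigmx e mu).
Local Notation M := (Mtensor e).

Lemma frob_eigmx Y : frob Q Y = \sum_p mu p * eigcoef e p Y.
Proof.
rewrite /frob; under eq_bigr do under eq_bigr do rewrite eigmxE mulr_suml.
under eq_bigr do rewrite exchange_big /=.
rewrite exchange_big /=; apply: eq_bigr => p _.
rewrite eigcoefE mulr_sumr; apply: eq_bigr => k _; rewrite mulr_sumr.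
by apply: eq_bigr => l _; ring.
Qed.

Lemma commute_pair_ij_kl : commute_tensor (pair_ij_kl Q) M.
Proof.
move=> X; rewrite !ddot_pair_ij_kl ddotZ Mtensor_eigmx // !frob_eigmx.
by congr (_ *: _); apply: eq_bigr => p _; rewrite eigcoef_Mtensor.
Qed.

Lemma commute_pair_ik_jl : commute_tensor (pair_ik_jl Q) M.
Proof. by move=> X; rewrite !ddot_pair_ik_jl eigmx_tr Mtensor_sandwich. Qed.

Lemma commute_pair_il_jk : commute_tensor (pair_il_jk Q) M.
Proof.
move=> X; rewrite !ddot_pair_il_jk eigmx_tr (Mtensor_sym e X) Mtensor_sandwich //.
rewrite !Mtensor_ddot; apply: eq_bigr => p _.
by rewrite !eigcoef_sandwich // eigcoef_tr.
Qed.

Lemma commute_symmetrize : commute_tensor (symmetrize (tprod Q Q)) M.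
Proof.
rewrite symmetrize_tprod; apply: commute_scale; apply: commute_sum => s.
have Qsym u v : Q u v = Q v u by rewrite -[in RHS]eigmx_tr mxE.
case: (pairing_term_perm s Qsym) => ->.
- exact: commute_pair_ij_kl.
- exact: commute_pair_ik_jl.
- exact: commute_pair_il_jk.
Qed.

End CommutationWithM.

Section IntegrationHalfLine.
Context {R : realType}.
Local Notation mu := (@lebesgue_measure R).
Local Notation I0oo := (`[0%R, +oo[%classic : set (measurableTypeR R)).

Definition integrable0oo (f : R -> R) : Prop := mu.-integrable I0oo (EFin \o f).

Lemma measurable_I0oo : measurable I0oo.
Proof. exact: measurable_itv. Qed.

Lemma eq_integrable0oo f g :
  (forall s, f s = g s) -> integrable0oo f -> integrable0oo g.
Proof. by move=> fg; apply: eq_integrable => // s _ /=; rewrite fg. Qed.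

Lemma integrable0oo_scale (k : R) f :
  integrable0oo f -> integrable0oo (fun s => k * f s).
Proof.
move=> intf; have := integrableZl measurable_I0oo k intf.
by apply: eq_integrable => // x _ /=; rewrite EFinM.
Qed.

Lemma integrable0oo_add f g :
  integrable0oo f -> integrable0oo g -> integrable0oo (fun s => f s + g s).
Proof.
move=> intf intg; have := integrableD measurable_I0oo intf intg.
by apply: eq_integrable => // x _ /=; rewrite EFinD.
Qed.

Lemma integrable0oo_sum (I : Type) (r : seq I) (f : I -> R -> R) :
  (forall i, integrable0oo (f i)) ->
  integrable0oo (fun s => \sum_(i <- r) f i s).
Proof.
move=> intf; elim: r => [|i r IH].
  by apply: eq_integrable (integrable0 mu I0oo) => // x _ /=; rewrite big_nil.
by apply: eq_integrable0oo (integrable0oo_add (intf i) IH) => x; rewrite big_cons.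
Qed.

Lemma Rintegral_sum (I : Type) (r : seq I) (f : I -> R -> R) :
  (forall i, integrable0oo (f i)) ->
  Rintegral mu I0oo (fun s => \sum_(i <- r) f i s)
  = \sum_(i <- r) Rintegral mu I0oo (f i).
Proof.
move=> intf; elim: r => [|i r IH].
  transitivity (Rintegral mu I0oo (fun=> 0)).
    by apply: eq_Rintegral => x _; rewrite big_nil.
  by rewrite Rintegral_cst ?measurable_I0oo // mul0r big_nil.
rewrite big_cons -IH -(RintegralD measurable_I0oo (intf i) (integrable0oo_sum r intf)).
by apply: eq_Rintegral => x _; rewrite big_cons.
Qed.

Lemma Rintegral_contract (c : 'I_3 -> 'I_3 -> R) (f : 'I_3 -> 'I_3 -> R -> R) :
  (forall k l, integrable0oo (f k l)) ->
  \sum_k \sum_l c k l * Rintegral mu I0oo (f k l)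
  = Rintegral mu I0oo (fun s => \sum_k \sum_l c k l * f k l s).
Proof.
move=> intf; have intcf k l : integrable0oo (fun s => c k l * f k l s).
  exact: integrable0oo_scale.
rewrite Rintegral_sum; last by move=> k; exact: integrable0oo_sum.
apply: eq_bigr => k _; rewrite Rintegral_sum //; apply: eq_bigr => l _.
by rewrite (RintegralZl _ measurable_I0oo (intf k l)).
Qed.

Lemma integrable0oo_contract (c : 'I_3 -> 'I_3 -> R) (f : 'I_3 -> 'I_3 -> R -> R) :
  (forall k l, integrable0oo (f k l)) ->
  integrable0oo (fun s => \sum_k \sum_l c k l * f k l s).
Proof.
move=> intf; apply: integrable0oo_sum => k; apply: integrable0oo_sum => l.
exact: integrable0oo_scale.
Qed.

Definition integral_tensor (G : R -> tensor4 R) : tensor4 R :=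
  fun i j k l => Rintegral mu I0oo (fun s => G s i j k l).

Lemma ddot_integral_tensor (G : R -> tensor4 R) X i j :
  (forall i j k l, integrable0oo (fun s => G s i j k l)) ->
  ddot (integral_tensor G) X i j = Rintegral mu I0oo (fun s => ddot (G s) X i j).
Proof.
move=> intG; rewrite mxE.
under eq_bigr do under eq_bigr do rewrite mulrC.
rewrite Rintegral_contract //; apply: eq_Rintegral => s _; rewrite mxE.
by apply: eq_bigr => k _; apply: eq_bigr => l _; rewrite mulrC.
Qed.

Lemma integrable0oo_ddot (G : R -> tensor4 R) X i j :
  (forall i j k l, integrable0oo (fun s => G s i j k l)) ->
  integrable0oo (fun s => ddot (G s) X i j).
Proof.
move=> intG; apply: eq_integrable0oo (integrable0oo_contract X (intG i j)) => s.
by rewrite mxE; under [RHS]eq_bigr do under eq_bigr do rewrite mulrC.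
Qed.

Lemma commute_integral (G : R -> tensor4 R) (W : tensor4 R) :
  (forall i j k l, integrable0oo (fun s => G s i j k l)) ->
  (forall s, commute_tensor (G s) W) ->
  commute_tensor (integral_tensor G) W.
Proof.
move=> intG cGW X; apply/matrixP => i j.
rewrite ddot_integral_tensor // [RHS]mxE.
under [RHS]eq_bigr => k _ do under eq_bigr => l _ do
  rewrite ddot_integral_tensor //.
rewrite Rintegral_contract => [|k l]; last exact: integrable0oo_ddot.
by apply: eq_Rintegral => s _; rewrite cGW mxE.
Qed.

End IntegrationHalfLine.

Section ResolventBounds.
Variable R : realType.
Local Notation mu := (@lebesgue_measure R).
Local Notation I0oo := (`[0%R, +oo[%classic : set (measurableTypeR R)).

Lemma continuous_inv_shift (c : R) : 0 < c -> continuous (fun s : R => (c + `|s|)^-1).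
Proof.
move=> c0 x; apply: (@continuousV _ _ (fun s : R => c + `|s|)).
  by rewrite gt_eqF // ltr_wpDr.
by apply: continuousD; [exact: cst_continuous | exact: norm_continuous].
Qed.

Lemma continuous_prod (I : Type) (r : seq I) (F : I -> R -> R) :
  (forall p, continuous (F p)) -> continuous (fun s => \prod_(p <- r) F p s).
Proof.
move=> cF; elim: r => [|p r IH] x.
  under eq_fun do rewrite big_nil; exact: cst_continuous.
under eq_fun do rewrite big_cons.
by apply: (@continuousM R R (F p) (fun s => \prod_(q <- r) F q s) x); [exact: cF | exact: IH].
Qed.

(* 1/(c+s)^2 is integrable on [0, +oo): its primitive -1/(c+s) has a finite
   limit at +oo. *)
Lemma integrable0oo_inv_sq (c : R) : 0 < c ->
  integrable0oo (fun s : R => ((c + `|s|)^-1) ^+ 2).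
Proof.
move=> c0.
have cont_f : continuous (fun s : R => ((c + `|s|)^-1) ^+ 2).
  have -> : (fun s : R => ((c + `|s|)^-1) ^+ 2)
            = (fun s => (c + `|s|)^-1) \* (fun s => (c + `|s|)^-1).
    by apply/funext => s; rewrite /= expr2.
  move=> x; apply: (@continuousM R R (fun s => (c + `|s|)^-1) (fun s => (c + `|s|)^-1) x);
    exact: continuous_inv_shift.
have pos_shift x : 0 <= x -> c + x != 0 by move=> x0; rewrite gt_eqF // ltr_wpDr.
have der_shift x : derivable (fun y : R => c + y) x 1.
  by apply: derivableD; [exact: derivable_cst | exact: derivable_id].
apply/integrableP; split.
  apply/measurable_EFinP; have := continuous_measurable_fun cont_f.
  exact: measurable_funS.
rewrite (_ : (\int[mu]_(x in I0oo) _ = \int[mu]_(x in I0oo) ((((c + `|x|)^-1) ^+ 2)%R)%:E)%E);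
  last by apply: eq_integral => x _ /=; rewrite ger0_norm // sqr_ge0.
rewrite (@ge0_continuous_FTC2y _ _ (fun x => - (c + x)^-1) 0 0).
- by rewrite ltry.
- by move=> x _; exact: sqr_ge0.
- exact: continuous_subspaceT.
- rewrite -oppr0; apply: cvgN; apply/gtr0_cvgV0; last exact: cvg_addrl.
  by near=> y; rewrite ltr_wpDr // ltW //; near: y; exact: nbhs_pinfty_gt.
- by move=> x x0; apply/derivableN/derivableV; [exact/pos_shift/ltW | exact: der_shift].
- have cont0 : {for 0, continuous (fun x : R => - (c + x)^-1)}.
    apply: continuousN; apply: (@continuousV R R (fun s : R => c + s) 0).
      by rewrite addr0 gt_eqF.
    by apply: continuousD; [exact: cst_continuous | exact: cvg_id].
  by apply: cvg_at_right_filter; exact: cont0.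
- move=> x; rewrite in_itv /= andbT => x0.
  rewrite derive1E deriveN; last by apply: derivableV; [exact/pos_shift/ltW | exact: der_shift].
  rewrite deriveV ?pos_shift ?ltW //.
  rewrite deriveD; [|exact: derivable_cst | exact: derivable_id].
  by rewrite derive_cst derive_id add0r scaler1 opprK gtr0_norm // exprVn.
Unshelve. all: by end_near. Qed.

End ResolventBounds.

Section CKernel.
Variables (R : realType) (e : 'I_3 -> 'cV[R]_3) (lam : 'I_3 -> R).
Hypothesis orth : forall p q : 'I_3, (e p)^T *m e q = (p == q)%:R%:M.
Hypothesis lam_pos : forall p, 0 < lam p.

(* Eigenvalues of (B + |s| I)^-1 and the square root of det (B + |s| I), for
   B = eigmx e lam; using |s| makes them continuous on the whole line. *)
Definition resolvent_eig (s : R) (p : 'I_3) : R := (lam p + `|s|)^-1.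
Definition sqrt_det (s : R) : R := Num.sqrt (\prod_p (lam p + `|s|)).

Definition C_kernel (s : R) : tensor4 R := fun i j k l =>
  (sqrt_det s)^-1 *
  symmetrize (tprod (eigmx e (resolvent_eig s)) (eigmx e (resolvent_eig s))) i j k l.

Lemma C_kernel_commute s : commute_tensor (C_kernel s) (Mtensor e).
Proof. by apply: commute_scale; exact: commute_symmetrize. Qed.

Lemma resolvent_eig_ge0 s p : 0 <= resolvent_eig s p.
Proof. by rewrite invr_ge0 ltW // ltr_wpDr. Qed.

Lemma sqrt_det_gt0 s : 0 < sqrt_det s.
Proof. by rewrite sqrtr_gt0; apply: prodr_gt0 => p _; rewrite ltr_wpDr. Qed.

Lemma continuous_inv_sqrt_det : continuous (fun s => (sqrt_det s)^-1).
Proof.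
move=> x; apply: (@continuousV R R sqrt_det x); first by rewrite gt_eqF // sqrt_det_gt0.
apply: (@continuous_comp R R R (fun s => \prod_p (lam p + `|s|)) (@Num.sqrt R) x);
  last exact: sqrt_continuous.
apply: continuous_prod => p y.
by apply: continuousD; [exact: cst_continuous | exact: norm_continuous].
Qed.

(* Since det (B + |s| I) >= det B, the product u_p u_q / sqrt (det (B + |s| I))
   of resolvent eigenvalues is dominated by (u_p^2 + u_q^2) / sqrt (det B),
   which is integrable. *)
Lemma integrable0oo_resolvent_pair p q :
  integrable0oo (fun s => resolvent_eig s p * resolvent_eig s q * (sqrt_det s)^-1).
Proof.
pose K := (Num.sqrt (\prod_p lam p))^-1.
have sqrt_detB_gt0 : 0 < Num.sqrt (\prod_p lam p) by rewrite sqrtr_gt0 prodr_gt0.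
have K_ge_inv s : (sqrt_det s)^-1 <= K.
  rewrite lef_pV2 ?posrE ?sqrt_det_gt0 //.
  rewrite /sqrt_det ler_sqrt; last by apply/ltW/prodr_gt0 => i _; rewrite ltr_wpDr.
  by apply: ler_prod => i _; rewrite (ltW (lam_pos i)) lerDl normr_ge0.
have dom : integrable0oo (fun s => K * (resolvent_eig s p ^+ 2 + resolvent_eig s q ^+ 2)).
  by apply/integrable0oo_scale/integrable0oo_add; exact: integrable0oo_inv_sq.
have cont : continuous (fun s => resolvent_eig s p * resolvent_eig s q * (sqrt_det s)^-1).
  move=> x.
  apply: (@continuousM R R (fun s => resolvent_eig s p * resolvent_eig s q)); last first.
    exact: continuous_inv_sqrt_det.
  by apply: (@continuousM R R (resolvent_eig^~ p)); exact: continuous_inv_shift.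
apply: (le_integrable measurable_I0oo _ _ dom).
  apply/measurable_EFinP; have := continuous_measurable_fun cont.
  exact: measurable_funS.
move=> x _ /=; rewrite lee_fin.
have up := resolvent_eig_ge0 x p; have uq := resolvent_eig_ge0 x q.
have w0 : 0 <= (sqrt_det x)^-1 by rewrite invr_ge0 ltW // sqrt_det_gt0.
rewrite !ger0_norm ?mulr_ge0 ?addr_ge0 ?sqr_ge0 ?(le_trans w0 (K_ge_inv x)) //.
rewrite [K * _]mulrC; apply: ler_pM => //; first exact: mulr_ge0.
nra.
Qed.

(* Every entry of the kernel is integrable: expanding the entries of
   eigmx e (resolvent_eig s) reduces it to the products bounded above. *)
Lemma integrable0oo_C_kernel i j k l : integrable0oo (fun s => C_kernel s i j k l).
Proof.
have entries a b c d : integrable0oo (fun s =>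
    eigmx e (resolvent_eig s) a b * eigmx e (resolvent_eig s) c d * (sqrt_det s)^-1).
  apply: eq_integrable0oo (integrable0oo_sum (index_enum _) (fun p =>
    integrable0oo_sum (index_enum _) (fun q =>
      integrable0oo_scale (eigproj e p a b * eigproj e q c d)
        (integrable0oo_resolvent_pair p q)))) => s.
  rewrite !eigmxE big_distrlr /= mulr_suml; apply: eq_bigr => p _.
  rewrite mulr_suml; apply: eq_bigr => q _; rewrite !eigprojE; ring.
have terms (σ : 'S_4) : integrable0oo (fun s => (sqrt_det s)^-1 *
    pairing_term (eigmx e (resolvent_eig s))
      (σ ord0) (σ (inord 1)) (σ (inord 2)) (σ (inord 3)) i j k l).
  by apply: eq_integrable0oo (entries _ _ _ _) => s; rewrite mulrC.
apply: eq_integrable0oo (integrable0oo_scale (4`!%:R)^-1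
  (integrable0oo_sum (index_enum _) terms)) => s.
by rewrite /C_kernel symmetrize_tprod mulrCA -mulr_sumr.
Qed.

Lemma C_integrand_eigmx i j k l s : 0 <= s ->
  C_integrand (eigmx e lam) i j k l s = C_kernel s i j k l.
Proof.
move=> s0; rewrite /C_integrand /C_kernel /resolvent_eig /sqrt_det ger0_norm //.
rewrite -eigmx_shift // eigmx_inv // => [|p]; last by rewrite gt_eqF // ltr_wpDr.
by rewrite eigmx_det // mulrC.
Qed.

Lemma Ctensor_commute : commute_tensor (Ctensor (eigmx e lam)) (Mtensor e).
Proof.
have -> : Ctensor (eigmx e lam) = fun i j k l => 3%:R / 4%:R * integral_tensor C_kernel i j k l.
  do 4 apply: funext => ?; congr (_ * _); apply: eq_Rintegral => s.
  by rewrite inE /= in_itv /= andbT; exact: C_integrand_eigmx.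
apply: commute_scale; apply: commute_integral; first exact: integrable0oo_C_kernel.
exact: C_kernel_commute.
Qed.

End CKernel.

Theorem mainTheorem15 (R : realType) (B : 'M[R]_3) (e : 'I_3 -> 'cV[R]_3)
  (D : tensor4 R) :
  spd B ->
  (forall i j : 'I_3, (e i)^T *m e j = (i == j)%:R%:M) ->
  (forall i : 'I_3, exists lam : R, B *m e i = lam *: e i) ->
  is_Dtensor B D ->
  (forall N : 'M[R]_3, symmetric_mx N ->
     ddot D (ddot (Mtensor e) N) = ddot (Mtensor e) (ddot D N)) /\
  (forall (F G : 'M[R]_3) (kappa : R),
     symmetric_mx F -> symmetric_mx G ->
     F = - ddot (Ctensor B) G ->
     0 < kappa <= 1 ->
     G - (1 - kappa) *: ddot (Mtensor e) G
       = - ddot D (F - (1 - kappa) *: ddot (Mtensor e) F)).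
Proof.
move=> spdB orth eig [_ [_ DC]].
have [lam eig_lam] := choice eig.
have lam_pos p : 0 < lam p := spd_eigenvalue_pos orth spdB (eig_lam p).
have DM : forall N, symmetric_mx N ->
    ddot D (ddot (Mtensor e) N) = ddot (Mtensor e) (ddot D N).
  apply: (commute_inverse _ (Mtensor_sym e)) DC.
  by rewrite (spectral_decomposition orth eig_lam); exact: Ctensor_commute orth lam_pos.
split=> // F G kappa symF symG FCG _.
apply: relaxation_preserves_relation => //.
by rewrite FCG ddotN (DC G symG).2.
Qed.
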